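(* A ring $R$ is CSNC if and only if (1) every clean element of $R$ is strongly clean, and (2) $R$ is a UU-ring.
   Context: All rings are associative with identity $1$. For a ring $R$, $\mathrm{Id}(R)$, $U(R)$, $\mathrm{Nil}(R)$ denote the sets of idempotents, units and nilpotent elements. An element $a\in R$ is clean if $a=e+u$ for some $e\in\mathrm{Id}(R)$, $u\in U(R)$, and strongly clean if such $e,u$ can be chosen with $eu=ue$ (equivalently $ea=ae$). An element $a$ is strongly nil-clean if $a=e+q$ with $e\in \mathrm{Id}(R)$, $q\in\mathrm{Nil}(R)$ and $eq=qe$. A ring $R$ is called CSNC if every clean element of $R$ is strongly nil-clean. $R$ is a UU-ring if $U(R)=1+\mathrm{Nil}(R)$. *)

From mathcomp Require Import all_boot all_algebra.
Set Implicit Arguments. Unset Strict Implicit. Unset Printing Implicit Defensive.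
Import GRing.Theory.
Local Open Scope ring_scope.

Section Defs.
Variable R : unitRingType.

Definition idempotent (e : R) : Prop := e * e = e.
Definition nilpotent (q : R) : Prop := exists n : nat, q ^+ n = 0.

Definition clean (a : R) : Prop :=
  exists e u : R, idempotent e /\ u \is a GRing.unit /\ a = e + u.

Definition strongly_clean (a : R) : Prop :=
  exists e u : R, idempotent e /\ u \is a GRing.unit /\ a = e + u /\ e * u = u * e.

Definition strongly_nil_clean (a : R) : Prop :=
  exists e q : R, idempotent e /\ nilpotent q /\ a = e + q /\ e * q = q * e.

Definition CSNC : Prop := forall a : R, clean a -> strongly_nil_clean a.

Definition UU_ring : Prop :=
  forall u : R, u \is a GRing.unit <-> exists q : R, nilpotent q /\ u = 1 + q.
End Defs.

From Pilot Require Import Defs.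
From mathcomp Require Import all_boot all_algebra zify.

Set Implicit Arguments.
Unset Strict Implicit.
Unset Printing Implicit Defensive.
Import GRing.Theory.
Local Open Scope ring_scope.

(* If a = e + q is strongly nil-clean, then a = (1 - e) + ((2e - 1) + q), where
   2e - 1 is an involution commuting with q, hence (2e - 1) + q is a unit.
   Conversely, in a UU-ring -1 = 1 + p with p nilpotent, so 2 = -p is nilpotent;
   a strongly clean a = e + (1 + q) is then (1 - e) + (2e + q), with 2e and q
   commuting nilpotents.  Finally a unit u is clean, so under CSNC u = e + q with
   e = u - q a unit idempotent, i.e. e = 1 and u = 1 + q. *)

Section NilpotentUnit.
Variable R : unitRingType.
Implicit Types (e q u x y : R).

Lemma expr_eq0_ge {x} {m n} : x ^+ m = 0 -> (m <= n)%N -> x ^+ n = 0.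
Proof. by move=> xm0 le_mn; rewrite -(subnKC le_mn) exprD xm0 mul0r. Qed.

Lemma nilpotentN q : nilpotent q -> nilpotent (- q).
Proof. by case=> n qn0; exists n; rewrite exprNn qn0 mulr0. Qed.

Lemma nilpotentM_comm x y : GRing.comm x y -> nilpotent x -> nilpotent (x * y).
Proof. by move=> cxy [n xn0]; exists n; rewrite exprMn_comm // xn0 mul0r. Qed.

Lemma nilpotentD_comm x y : GRing.comm x y -> nilpotent x -> nilpotent y ->
  nilpotent (x + y).
Proof.
move=> cxy [m xm0] [n yn0]; exists (m + n)%N.
rewrite exprDn_comm // big1 // => i _.
have [le_ni | lt_in] := leqP n i; first by rewrite (expr_eq0_ge yn0 le_ni) mulr0 mul0rn.
have le_m_mn_i : (m <= m + n - i)%N by lia.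
by rewrite (expr_eq0_ge xm0 le_m_mn_i) mul0r mul0rn.
Qed.

Lemma unitr1Bnil q : nilpotent q -> (1 - q) \is a GRing.unit.
Proof.
case=> n qn0; apply/unitrP; exists (\sum_(i < n) q ^+ i).
have geom : (1 - q) * \sum_(i < n) q ^+ i = 1.
  by apply: oppr_inj; rewrite -mulNr opprB -subrX1 qn0 sub0r.
split=> //; rewrite -[RHS]geom; apply/commr_sym/commr_sum => i _.
by apply/commrX/commr_sym/commrB; [apply: commr1 | apply: commr_refl].
Qed.

Lemma unitrD_nil_comm u q : u \is a GRing.unit -> nilpotent q ->
  GRing.comm u q -> (u + q) \is a GRing.unit.
Proof.
move=> Uu nq cuq.
have -> : u + q = (1 - - (q / u)) * u by rewrite opprK mulrDl mul1r divrK.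
rewrite unitrMl //; apply/unitr1Bnil/nilpotentN/nilpotentM_comm => //.
exact/commrV/commr_sym.
Qed.

Lemma unitr1Dnil q : nilpotent q -> (1 + q) \is a GRing.unit.
Proof.
by move=> nq; apply: unitrD_nil_comm => //; [apply: unitr1 | apply/commr_sym/commr1].
Qed.

Lemma idempotent1B e : Defs.idempotent e -> Defs.idempotent (1 - e).
Proof.
by rewrite /Defs.idempotent => ee; rewrite mulrBl mul1r mulrBr mulr1 ee subrr subr0.
Qed.

Lemma idempotent_unit_eq1 {e} : Defs.idempotent e -> e \is a GRing.unit -> e = 1.
Proof. by move=> ee Ue; apply: (mulrI Ue); rewrite ee mulr1. Qed.

Lemma strongly_nil_clean_strongly_clean x :
  strongly_nil_clean x -> strongly_clean x.
Proof.
case=> [e [q [ee [nq [-> ceq]]]]].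
pose w := e *+ 2 - 1.
have ww : w * w = 1.
  rewrite /w mulrBl mulrBr mul1r mulr1 mulrnAl mulrnAr ee.
  by rewrite opprB mulr2n addrK addrC subrK.
have cew : GRing.comm e w by apply: commrB; [apply/commrMn/commr_refl | apply: commr1].
have cwq : GRing.comm w q.
  by apply/commr_sym/commrB; [apply/commrMn/commr_sym | apply: commr1].
exists (1 - e), (w + q); split; first exact: idempotent1B.
split; first by apply: unitrD_nil_comm => //; apply/unitrP; exists w.
split.
  by rewrite /w addrA; congr (_ + q); rewrite mulr2n addrC -!addrA addKr subrr addr0.
by apply/commr_sym/commrB; [apply: commr1 | apply/commr_sym/commrD].
Qed.

Lemma strongly_nil_clean_unit_1Dnil u : u \is a GRing.unit ->
  strongly_nil_clean u -> exists q, nilpotent q /\ u = 1 + q.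
Proof.
move=> Uu [e [q [ee [nq [Eu ceq]]]]]; exists q; split=> //.
have cuq : GRing.comm u q by rewrite Eu; apply/commr_sym/commrD => //; apply: commr_refl.
have Ue : e \is a GRing.unit.
  rewrite -(addrK q e) -Eu.
  by apply: unitrD_nil_comm => //; [exact: nilpotentN | exact: commrN].
by rewrite Eu (idempotent_unit_eq1 ee Ue).
Qed.

Lemma UU_ring_nilpotent2 : UU_ring R -> nilpotent (2%:R : R).
Proof.
move=> UU; have [p [np Ep]] := (UU (-1)).1 (unitrN1 R).
have -> : 2%:R = - p :> R by rewrite -(addKr 1 p) -Ep -opprD opprK.
exact: nilpotentN.
Qed.

Lemma UU_strongly_clean_strongly_nil_clean x : UU_ring R ->
  strongly_clean x -> strongly_nil_clean x.
Proof.
move=> UU [e [u [ee [Uu [Ex ceu]]]]].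
have [q [nq Eu]] := (UU u).1 Uu.
have ceq : GRing.comm e q by move: ceu; rewrite Eu mulrDr mulrDl mulr1 mul1r => /addrI.
have c2e : GRing.comm (2%:R : R) e by apply/commr_sym/commr_nat.
exists (1 - e), (e *+ 2 + q); split; first exact: idempotent1B.
split.
  rewrite -mulr_natl; apply: nilpotentD_comm => //.
  - by apply/commr_sym/commrM; [apply: commr_nat | apply: commr_sym].
  - exact: nilpotentM_comm c2e (UU_ring_nilpotent2 UU).
split; first by rewrite Ex Eu mulr2n !addrA; congr (_ + q); rewrite subrK addrC.
apply/commr_sym/commrB; first exact: commr1.
by apply/commr_sym/commrD => //; apply/commrMn/commr_refl.
Qed.

End NilpotentUnit.

Theorem theorem2p4 (R : unitRingType) :
  CSNC R <-> ((forall a : R, clean a -> strongly_clean a) /\ UU_ring R).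
Proof.
split=> [csnc | [clean_sc UU] a /clean_sc /(UU_strongly_clean_strongly_nil_clean UU) //].
split=> [a /csnc /strongly_nil_clean_strongly_clean // | u]; split=> [Uu | [q [nq ->]]].
- apply: strongly_nil_clean_unit_1Dnil => //; apply: csnc.
  by exists 0, u; rewrite /Defs.idempotent mul0r add0r.
- exact: unitr1Dnil.
Qed.
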